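(* Let $S_1 = A_3^*$ be the set of nonnegative integers whose base-$3$ expansion contains no digit $2$, and for $n\ge 2$ let $S_n$ be the set of positive integers $k$ such that $v_p(k)\in S_{n-1}$ for each prime $p\mid k$. Then for each $n$, $S_n$ has lower uniform density $0$.
   Context: The lower uniform density of $A\subseteq\mathbb{N}$ is $\underline{u}(A) = \lim_{s\to\infty} \min_{n\ge 0} \frac{1}{s}\,\#\{a\in A : n < a \le n+s\}$. *)

From HB Require Import structures.
From mathcomp Require Import all_boot all_order all_algebra.
From mathcomp Require Import all_classical all_reals all_analysis.
Set Implicit Arguments. Unset Strict Implicit. Unset Printing Implicit Defensive.
Import Order.TTheory GRing.Theory Num.Theory.

(* base-3 digits of k (least significant first); fuel k suffices since k %/ 3 < k *)
Fixpoint digits3_aux (fuel k : nat) : seq nat :=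
  match fuel with
  | 0 => [::]
  | f.+1 => if k == 0 then [::] else (k %% 3) :: digits3_aux f (k %/ 3)
  end.
Definition digits3 (k : nat) : seq nat := digits3_aux k k.

Definition A3star (k : nat) : bool := 2 \notin digits3 k.

(* Saux m = S_{m+1} *)
Fixpoint Saux (m : nat) : pred nat :=
  match m with
  | 0 => A3star
  | m'.+1 => fun k => (0 < k) && all (fun p => Saux m' (logn p k)) (primes k)
  end.

(* S n for n >= 1 *)
Definition S (n : nat) : pred nat := Saux n.-1.

Definition window_count (A : pred nat) (n s : nat) : nat := count A (iota n.+1 s).

Lemma min_count_ex (A : pred nat) (s : nat) :
  exists m, `[< exists n, window_count A n s = m >].
Proof. by exists (window_count A 0 s); apply/asboolP; exists 0. Qed.

Definition min_count (A : pred nat) (s : nat) : nat := ex_minn (min_count_ex A s).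

(* the sequence whose limit (s -> oo) is the lower uniform density *)
Definition lud_seq (R : realType) (A : pred nat) (s : nat) : R :=
  (min_count A s)%:R / s%:R.

From HB Require Import structures.
From mathcomp Require Import all_boot all_order all_algebra.
From mathcomp Require Import all_classical all_reals all_analysis.
Import Order.TTheory GRing.Theory Num.Theory.
Import numFieldNormedType.Exports.
From mathcomp Require Import zify.

(* Every S_n misses arbitrarily long blocks of consecutive integers, so the
   minimal window count is 0 for every window length.  For S_1, the whole
   block [2 * 3^s, 3^(s+1)) consists of numbers with leading ternary digit 2.
   For S_(m+2), pick a number t_m outside S_(m+1) (a tower of 2's) and
   distinct primes p_0, ..., p_(s-1); by the Chinese remainder theorem there
   is x with v_(p_i)(x + i + 1) = t_m for all i < s, which puts every element
   of the block x+1, ..., x+s outside S_(m+2). *)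

Lemma window_count_eq0 (A : pred nat) n s :
  (forall k, (n < k <= n + s)%N -> ~~ A k) -> window_count A n s = 0.
Proof.
move=> notA; apply/eqP; rewrite -leqn0 leqNgt -has_count.
apply/hasPn => k; rewrite mem_iota => /andP[ltnk ltk]; apply: notA.
by rewrite ltnk -ltnS -addSn.
Qed.

Lemma min_count_eq0 (A : pred nat) n s :
  window_count A n s = 0 -> min_count A s = 0.
Proof.
move=> empty_window; rewrite /min_count; case: ex_minnP => k _ /(_ 0) minP.
by apply/eqP; rewrite -leqn0; apply: minP; apply/asboolP; exists n.
Qed.

Lemma mem_digits3_aux_lead2 m f k :
  (2 * 3 ^ m <= k < 3 ^ m.+1)%N -> (k <= f)%N -> 2 \in digits3_aux f k.
Proof.
elim: m f k => [|m IH] [|f] k /andP[lo hi] kf.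
- by move: lo; rewrite leqn0 in kf; rewrite (eqP kf).
- by have -> : k = 2 by lia.
- by move: lo; rewrite leqn0 in kf; rewrite (eqP kf) leqn0 muln_eq0 expn_eq0.
have k_gt0 : (0 < k)%N by apply: leq_trans lo; rewrite muln_gt0 expn_gt0.
rewrite /= gtn_eqF // inE; apply/orP; right; apply: IH.
  by rewrite leq_divRL // -mulnA -expnSr ltn_divLR // -expnSr lo.
by rewrite -ltnS; apply: leq_trans kf; rewrite ltn_Pdiv.
Qed.

Lemma S1_window s : exists n, window_count (S 1) n s = 0.
Proof.
exists (2 * 3 ^ s).-1; apply: window_count_eq0 => k.
rewrite prednK ?muln_gt0 ?expn_gt0 // => /andP[lo hi].
rewrite /S /= /A3star negbK; apply: (mem_digits3_aux_lead2 s) (leqnn _).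
have : (s < 3 ^ s)%N by rewrite ltn_expl.
rewrite expnS; lia.
Qed.

Fixpoint tower2 (m : nat) : nat := if m is m'.+1 then 2 ^ tower2 m' else 2.

Lemma tower2_gt0 m : (0 < tower2 m)%N.
Proof. by case: m => //= m; rewrite expn_gt0. Qed.

Lemma Saux_tower2 m : ~~ Saux m (tower2 m).
Proof.
elim: m => [|m IH] //=; rewrite expn_gt0 /=; apply/allPn; exists 2.
  by rewrite mem_primes /= expn_gt0 /= dvdn_exp // tower2_gt0.
by rewrite pfactorK.
Qed.

Fixpoint prime_seq (i : nat) : nat :=
  if i is i'.+1 then sval (prime_above (prime_seq i')) else 2.

Lemma prime_seq_prime i : prime (prime_seq i).
Proof. by case: i => //= i; case: prime_above. Qed.

Lemma prime_seq_inj : injective prime_seq.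
Proof.
have step i : (prime_seq i < prime_seq i.+1)%N by rewrite /=; case: prime_above.
have incr : {homo prime_seq : i j / (i < j)%N} := homo_ltn ltn_trans step.
by move=> i j eq_ij; case: (ltngtP i j) => // /incr; rewrite eq_ij ltnn.
Qed.

Section PrimePowerResidues.

Variables (p : nat -> nat) (e : nat).
Hypotheses (p_prime : forall i, prime (p i)) (p_inj : injective p).

Lemma exists_residues_pexp s :
  exists x M : nat, (forall i, (i < s)%N -> p i ^ e.+1 %| M /\ (x + i.+1) %% p i ^ e.+1 = p i ^ e)
    /\ (forall j, (s <= j)%N -> coprime M (p j ^ e.+1)).
Proof.
elim: s => [|s [x [M [resM coM]]]].
  by exists 0, 1; split => // j _; rewrite coprime1n.
set q := p s ^ e.+1.
have le_s_q : (s.+1 <= q * s.+1)%N by rewrite leq_pmull // expn_gt0 prime_gt0.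
set t := q * s.+1 - s.+1 + p s ^ e.
have res_t : (t + s.+1) %% q = p s ^ e.
  rewrite /t addnAC subnK // [q * _]mulnC modnMDl modn_small //.
  by rewrite /q ltn_exp2l ?prime_gt1.
have coMq : coprime M q by apply: coM.
exists (chinese M q x t), (M * q); split.
  move=> i; rewrite ltnS leq_eqVlt => /orP[/eqP->|lt_is].
    by rewrite dvdn_mull // -modnDml chinese_modr // modnDml.
  have [dvd_M res_i] := resM i lt_is; split; first exact: dvdn_mulr.
  have chinese_mod_i : chinese M q x t = x %[mod p i ^ e.+1].
    by rewrite -(modn_dvdm _ dvd_M) chinese_modl // modn_dvdm.
  by rewrite -res_i -modnDml chinese_mod_i modnDml.
move=> j lt_sj; rewrite coprimeMl coM ?(ltnW lt_sj) //=.
apply/coprimeXl/coprimeXr; rewrite prime_coprime ?dvdn_prime2 //.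
by apply/eqP => /p_inj eq_sj; move: lt_sj; rewrite eq_sj ltnn.
Qed.

Lemma exists_shift_logn s :
  exists x, forall i, (i < s)%N -> (0 < x + i.+1)%N /\ logn (p i) (x + i.+1) = e.
Proof.
have [x [M [res _]]] := exists_residues_pexp s.
exists x => i /res[_]; set y := x + i.+1 => res_y.
have y_gt0 : (0 < y)%N by rewrite /y addnS.
have pe_gt0 : (0 < p i ^ e)%N by rewrite expn_gt0 prime_gt0.
have dvd_y : p i ^ e %| y.
  by rewrite (divn_eq y (p i ^ e.+1)) res_y dvdn_add // dvdn_mull // dvdn_exp2l.
have ndvd_y : ~~ (p i ^ e.+1 %| y) by rewrite /dvdn res_y -lt0n.
by rewrite !pfactor_dvdn // in dvd_y ndvd_y; split=> //; lia.
Qed.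

End PrimePowerResidues.

Lemma Saux_succ_notin m k p :
  prime p -> (0 < k)%N -> logn p k = tower2 m -> ~~ Saux m.+1 k.
Proof.
move=> p_prime k_gt0 vk; apply/negP => /andP[_ /allP Sk].
have /Sk : p \in primes k by rewrite -logn_gt0 vk tower2_gt0.
by rewrite vk; apply/negP/Saux_tower2.
Qed.

Lemma S_window n s : (1 <= n)%N -> exists n0, window_count (S n) n0 s = 0.
Proof.
case: n => [|[|m]] // _; first exact: S1_window.
have [x logx] := exists_shift_logn prime_seq (tower2 m) prime_seq_prime prime_seq_inj s.
exists x; apply: window_count_eq0 => k /andP[lo hi].
have [|k_gt0 vk] := logx (k - x.+1); first lia.
have -> : k = x + (k - x.+1).+1 by lia.
exact: Saux_succ_notin (prime_seq_prime _) k_gt0 vk.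
Qed.

Local Open Scope classical_set_scope.
Local Open Scope ring_scope.

Theorem mainTheorem9 (R : realType) (n : nat) :
  (1 <= n)%N -> lud_seq R (S n) @ \oo --> (0 : R).
Proof.
move=> n_ge1.
have -> : lud_seq R (S n) = fun _ => 0.
  apply: funext => s; rewrite /lud_seq.
  by have [n0 /min_count_eq0 ->] := S_window n s n_ge1; rewrite mul0r.
exact: cvg_cst.
Qed.
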